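(* Let $n\ge 2$ and regard $\ell_{T(A_n)}$ as a random variable on $A_n$ with the uniform distribution. Then $$E[\ell_{T(A_n)}]=n-H_n-\tfrac12,\qquad \mathrm{Var}[\ell_{T(A_n)}]=H_n-H_{n,2}-\tfrac14.$$
   Context: $A_n$ is the alternating group on $\{1,\dots,n\}$, $T(A_n)=\{(1\,2)(i\,j)\mid 1\le i<j\le n\}$, and $\ell_{T(A_n)}(v)=\min\{r\ge 0\mid v=t_1\cdots t_r,\ t_i\in T(A_n)\}$. $E[s]=\frac{1}{|A_n|}\sum_{v\in A_n}s(v)$ and $\mathrm{Var}[s]=E[s^2]-E[s]^2$. $H_n=\sum_{i=1}^n \frac1i$ and $H_{n,2}=\sum_{i=1}^n\frac{1}{i^2}$. *)

From mathcomp Require Import all_boot all_order all_algebra all_fingroup all_solvable.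
From Stdlib Require Import ClassicalEpsilon.
Set Implicit Arguments. Unset Strict Implicit. Unset Printing Implicit Defensive.
Import GRing.Theory Num.Theory.
Local Open Scope ring_scope.

(* Points 1..n are represented by 'I_n = {0,...,n-1}; the paper's points 1,2
   are the ordinals with values 0,1. *)

Definition TA (n : nat) : {set {perm 'I_n}} :=
  [set s : {perm 'I_n} | [exists a : 'I_n, exists b : 'I_n,
      exists i : 'I_n, exists j : 'I_n,
      [&& val a == 0%N, val b == 1%N, (i < j)%N & s == (tperm a b * tperm i j)%g]]].

Definition is_prod_of (n r : nat) (v : {perm 'I_n}) : bool :=
  [exists w : r.-tuple {perm 'I_n},
     all (fun t => t \in TA n) w && ((\prod_(t <- w) t)%g == v)].

(* ell_T(v) = min { r >= 0 | v = t_1 ... t_r, t_i in T(A_n) }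
   (set to 0 if no such r exists, which never happens for v in A_n). *)
Definition ellT (n : nat) (v : {perm 'I_n}) : nat :=
  match excluded_middle_informative (exists r, is_prod_of r v) with
  | left h => ex_minn h
  | right _ => 0%N
  end.

Definition harm (n : nat) : rat := \sum_(1 <= i < n.+1) (i%:R)^-1.
Definition harm2 (n : nat) : rat := \sum_(1 <= i < n.+1) ((i%:R) ^+ 2)^-1.

Definition EAlt (n : nat) (s : {perm 'I_n} -> rat) : rat :=
  (#|(Alt 'I_n)|%:R)^-1 * \sum_(v in (Alt 'I_n)) s v.
Definition VarAlt (n : nat) (s : {perm 'I_n} -> rat) : rat :=
  EAlt (fun v => s v ^+ 2) - (EAlt s) ^+ 2.

(* Write c(u) for the number of cycles of u and t0 = (1 2).  Left multiplication
   by a transposition changes c by exactly 1, and t0 (i j) = (t0(i) t0(j)) t0, so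
   M(u) = max (c(u), c(t0 u)) changes by at most 1 under left multiplication by an
   element of T(A_n); conversely, M(u) < n can always be raised by one such step.
   As M(1) = n, this gives ell(v) = L(v) := n - M(v) on A_n.
   Write s in S_(m+1) uniquely as (j m) s' with s' in S_m: for m >= 2, L grows by
   1 when j <> m and is unchanged when j = m.  Hence on S_n, L is a sum of
   independent Bernoulli(m/(m+1)) variables, m = 2, ..., n-1, with mean
   sum m/(m+1) = n - H_n - 1/2 and variance sum m/(m+1)^2 = H_n - H_(n,2) - 1/4.
   Finally u |-> t0 u preserves L and exchanges A_n with its complement, so L has
   the same distribution on A_n as on S_n. *)

From mathcomp Require Import all_boot all_order all_algebra all_fingroup all_solvable.
From mathcomp Require Import zify ring.
From Stdlib Require Import ClassicalEpsilon.
Import GRing.Theory Num.Theory.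
Set Implicit Arguments. Unset Strict Implicit. Unset Printing Implicit Defensive.

Section Cycles.
Variable T : finType.
Implicit Types u : {perm T}.
Local Open Scope group_scope.

Definition ncycles u := #|porbits u|.

Lemma ncycles_le_card u : ncycles u <= #|T|.
Proof. exact: leq_imset_card. Qed.

Lemma porbit_fix u x : u x = x -> porbit u x = [set x].
Proof.
move=> ux; apply/setP => z; rewrite inE; apply/porbitP/eqP => [[i ->]|->].
  by rewrite permX_fix.
by exists 0%N; rewrite expg0 perm1.
Qed.

Lemma ncycles1 : ncycles 1 = #|T|.
Proof.
have orbit1 : porbit (1 : {perm T}) =1 set1.
  by move=> x; apply: porbit_fix; rewrite perm1.
by rewrite /ncycles /porbits (eq_imset _ orbit1) card_imset //; apply: set1_inj.
Qed.

Lemma ncycles_mul_tperm x y u :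
  ncycles (tperm x y * u) + (x \notin porbit u y).*2 = ncycles u + (x != y).
Proof. exact: porbits_mul_tperm. Qed.

Lemma leq_ncycles_mul_tperm x y u : ncycles u <= (ncycles (tperm x y * u)).+1.
Proof.
have [->|xy] := eqVneq x y; first by rewrite tperm1 mul1g.
by have := ncycles_mul_tperm x y u; rewrite xy; case: (_ \notin _) => /=; lia.
Qed.

Lemma ncycles_mul_tperm_fix x y u :
  u y = y -> x != y -> (ncycles (tperm x y * u)).+1 = ncycles u.
Proof.
move=> uy xy; have := ncycles_mul_tperm x y u.
by rewrite porbit_fix // inE xy /=; lia.
Qed.

(* [(x (u x)) * u] fixes [x], cutting it out of its cycle in [u]. *)
Lemma exists_tperm_ncyclesS u : u != 1 ->
  exists x y, x != y /\ ncycles (tperm x y * u) = (ncycles u).+1.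
Proof.
move=> u_neq1; have [x uxx|u_id] := pickP (fun x => u x != x); last first.
  by case/eqP: u_neq1; apply/permP => x; rewrite perm1; apply/eqP/negbFE/u_id.
exists x, (u x); split; first by rewrite eq_sym.
have x_orbit : x \in porbit u (u x).
  by rewrite porbit_sym; have := mem_porbit u 1 x; rewrite expg1.
by have := ncycles_mul_tperm x (u x) u; rewrite x_orbit eq_sym uxx /=; lia.
Qed.

Lemma ncycles_eq_card u : ncycles u = #|T| -> u = 1.
Proof.
move=> uT; apply/eqP/negP => /negP /exists_tperm_ncyclesS [x [y [_]]].
by have := ncycles_le_card (tperm x y * u); rewrite uT => /[swap] ->; rewrite ltnn.
Qed.

End Cycles.

Lemma tperm_mul (T : finType) (s : {perm T}) x y :
  (tperm x y * s = s * tperm (s x) (s y))%g.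
Proof. by rewrite -tpermJ /conjg mulgA mulgV mul1g. Qed.

Section MaxCycles.
Variables (T : finType) (a b : T).
Implicit Types u : {perm T}.
Local Notation t0 := (tperm a b).
Local Open Scope group_scope.

Lemma t0_mul_tperm x y : t0 * tperm x y = tperm (t0 x) (t0 y) * t0.
Proof. by rewrite [RHS]tperm_mul !tpermK. Qed.

Definition maxcycles u := maxn (ncycles u) (ncycles (t0 * u)).

Lemma maxcycles_le_card u : maxcycles u <= #|T|.
Proof. by rewrite geq_max !ncycles_le_card. Qed.

Lemma maxcycles_mul_t0 u : maxcycles (t0 * u) = maxcycles u.
Proof. by rewrite /maxcycles mulgA tperm2 mul1g maxnC. Qed.

Lemma leq_maxcycles_mul_tperm x y u :
  maxcycles u <= (maxcycles (tperm x y * u)).+1.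
Proof.
rewrite /maxcycles geq_max; apply/andP; split.
  by apply: leq_trans (leq_ncycles_mul_tperm x y u) _; rewrite ltnS leq_maxl.
rewrite mulgA t0_mul_tperm -mulgA.
by apply: leq_trans (leq_ncycles_mul_tperm (t0 x) (t0 y) _) _; rewrite ltnS leq_maxr.
Qed.

Lemma maxcycles_prod_TA (w : seq {perm T}) :
  {in w, forall t, exists x y, t = t0 * tperm x y} ->
  #|T| <= maxcycles (\prod_(t <- w) t) + size w.
Proof.
elim: w => [_|t w IHw w_t0]; first by rewrite big_nil addn0 leq_max ncycles1 leqnn.
have [x [y ->]] := w_t0 t (mem_head t w).
have := IHw (fun t' wt' => w_t0 t' (mem_behead (s := t :: w) wt')).
have := leq_maxcycles_mul_tperm x y (\prod_(t <- w) t).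
rewrite big_cons -mulgA maxcycles_mul_t0 addnS -addSn => le_step /leq_trans; apply.
by rewrite leq_add2r.
Qed.

Lemma exists_tperm_maxcyclesS u : maxcycles u < #|T| ->
  exists x y, x != y /\ maxcycles (tperm x y * u) = (maxcycles u).+1.
Proof.
move=> u_lt; suff [x [y [xy lt_u]]] :
    exists x y, x != y /\ maxcycles u < maxcycles (tperm x y * u).
  exists x, y; split => //; apply/eqP; rewrite eqn_leq lt_u andbT.
  by have := leq_maxcycles_mul_tperm x y (tperm x y * u); rewrite tpermKg.
have neq1 (v : {perm T}) : ncycles v < #|T| -> v != 1.
  by apply: contraTneq => ->; rewrite ncycles1 ltnn.
rewrite /maxcycles in u_lt *; have [le_t0u|lt_u] := leqP (ncycles (t0 * u)) (ncycles u).
- rewrite (maxn_idPl le_t0u) in u_lt *.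
  have [x [y [xy ncyclesS]]] := exists_tperm_ncyclesS (neq1 u u_lt).
  by exists x, y; rewrite ncyclesS leq_maxl.
- have /neq1 /exists_tperm_ncyclesS [x [y [xy ncyclesS]]] :=
    leq_ltn_trans (leq_maxr _ _) u_lt.
  exists (t0 x), (t0 y); split; first by rewrite (inj_eq perm_inj).
  by rewrite mulgA t0_mul_tperm !tpermK -mulgA ncyclesS leq_maxr.
Qed.

End MaxCycles.

Section Length.
Variable n : nat.
Hypothesis n_gt1 : (1 < n)%N.
Implicit Types u v : {perm 'I_n}.
Let o0 : 'I_n := Ordinal (ltnW n_gt1).
Let o1 : 'I_n := Ordinal n_gt1.
Local Notation t0 := (tperm o0 o1).
Local Open Scope group_scope.

Let o0_neq_o1 : o0 != o1. Proof. by []. Qed.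

Definition tlen u := n - maxcycles o0 o1 u.

Lemma tlen1 : tlen 1 = 0%N.
Proof. by apply/eqP; rewrite subn_eq0 leq_max ncycles1 card_ord leqnn. Qed.

Lemma tlen_mul_t0 u : tlen (t0 * u) = tlen u.
Proof. by rewrite /tlen maxcycles_mul_t0. Qed.

Lemma tlen_mul_tperm_fix (x y : 'I_n) u :
  (2 <= y)%N -> u y = y -> x != y -> tlen (tperm x y * u) = (tlen u).+1.
Proof.
move=> ge2_y uy xy; have t0y : t0 y = y.
  by rewrite tpermD // -val_eqE /= neq_ltn; lia.
have cycles_u := ncycles_mul_tperm_fix uy xy.
have cycles_t0u : (ncycles (t0 * (tperm x y * u))).+1 = ncycles (t0 * u).
  rewrite mulgA t0_mul_tperm -mulgA t0y ncycles_mul_tperm_fix //.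
    by rewrite permM t0y uy.
  by rewrite -t0y (inj_eq perm_inj).
have := maxcycles_le_card o0 o1 u.
by rewrite /tlen /maxcycles -cycles_u -cycles_t0u maxnSS card_ord => /subnSK.
Qed.

Lemma TAP t : t \in TA n -> exists x y, t = t0 * tperm x y.
Proof.
rewrite inE => /existsP[a /existsP[b /existsP[x /existsP[y]]]].
case/and4P=> /eqP a0 /eqP b1 _ /eqP ->.
have -> : a = o0 by exact: val_inj.
have -> : b = o1 by exact: val_inj.
by exists x, y.
Qed.

Lemma mem_TA x y : x != y -> t0 * tperm x y \in TA n.
Proof.
move=> xy; have [i [j [lt_ij ->]]] :
    exists i j : 'I_n, (i < j)%N /\ tperm x y = tperm i j.
  case: (ltngtP x y) => [lt_xy|lt_yx|/val_inj eq_xy]; last by rewrite eq_xy eqxx in xy.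
  - by exists x, y.
  - by exists y, x; rewrite tpermC.
rewrite inE; apply/existsP; exists o0; apply/existsP; exists o1.
by apply/existsP; exists i; apply/existsP; exists j; rewrite lt_ij !eqxx.
Qed.

Lemma is_prod_of_mulTA r t v :
  t \in TA n -> is_prod_of r v -> is_prod_of r.+1 (t * v).
Proof.
move=> TAt /existsP[w /andP[TAw /eqP <-]].
apply/existsP; exists [tuple of t :: w].
by rewrite /= TAt TAw big_cons eqxx.
Qed.

Lemma tlen_le_prod r v : is_prod_of r v -> (tlen v <= r)%N.
Proof.
case/existsP=> w /andP[/allP TAw /eqP <-].
have := maxcycles_prod_TA (fun t wt => TAP (TAw t wt)).
by rewrite size_tuple card_ord /tlen leq_subLR.
Qed.

Lemma tlen_eq0 v : ~~ odd_perm v -> tlen v = 0%N -> v = 1.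
Proof.
have eq_card u : (n <= ncycles u)%N -> u = 1.
  by move=> le_n; apply/ncycles_eq_card/eqP; rewrite eqn_leq ncycles_le_card card_ord.
move=> ev /eqP; rewrite subn_eq0 leq_max => /orP[/eq_card //|/eq_card t0v].
by move: ev; rewrite -(tpermKg o0 o1 v) t0v mulg1 odd_tperm o0_neq_o1.
Qed.

Lemma is_prod_of_tlen v : ~~ odd_perm v -> is_prod_of (tlen v) v.
Proof.
move def_r: (tlen v) => r; elim: r v def_r => [|r IHr] v tlen_v ev.
  by rewrite (tlen_eq0 ev tlen_v); apply/existsP; exists [tuple]; rewrite /= big_nil.
have lt_n : (maxcycles o0 o1 v < #|'I_n|)%N.
  by move: tlen_v; rewrite card_ord /tlen; lia.
have [x [y [xy maxS]]] := exists_tperm_maxcyclesS lt_n.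
pose v' := t0 * (tperm x y * v).
have -> : v = t0 * tperm (t0 x) (t0 y) * v'.
  by rewrite /v' t0_mul_tperm !tpermK -mulgA !tpermKg.
apply: is_prod_of_mulTA; first by apply: mem_TA; rewrite (inj_eq perm_inj).
apply: IHr.
  by move: tlen_v; rewrite /tlen /v' maxcycles_mul_t0 maxS; lia.
by rewrite /v' !odd_permM !odd_tperm xy o0_neq_o1 (negbTE ev).
Qed.

Lemma ellT_tlen v : v \in Alt 'I_n -> ellT v = tlen v.
Proof.
rewrite Alt_even /ellT => /is_prod_of_tlen prod_v.
case: excluded_middle_informative => [ex_prod|[]]; last by exists (tlen v).
case: ex_minnP => m prod_m min_m.
by apply/anti_leq; rewrite min_m // tlen_le_prod.
Qed.

End Length.

Lemma nat_ind_from (P : nat -> Prop) k n :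
  P k -> (forall m, (k <= m < n)%N -> P m -> P m.+1) ->
  forall m, (k <= m <= n)%N -> P m.
Proof.
move=> Pk PS m /andP[le_km le_mn]; rewrite -(subnK le_km) in le_mn *.
elim: (m - k)%N le_mn => [//|d IHd] le_dn; rewrite addSn.
by apply: PS; [lia | apply: IHd; lia].
Qed.

Local Open Scope ring_scope.

Lemma harmS m : harm m.+1 = harm m + m.+1%:R^-1.
Proof. by rewrite /harm big_nat_recr. Qed.

Lemma harm2S m : harm2 m.+1 = harm2 m + (m.+1%:R ^+ 2)^-1.
Proof. by rewrite /harm2 big_nat_recr. Qed.

Section Distribution.
Variables (n : nat) (n_gt1 : (1 < n)%N).
Local Notation len := (tlen n_gt1).
Local Notation t0 := (tperm (Ordinal (ltnW n_gt1)) (Ordinal n_gt1)).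
Local Notation S_ m := (perm.Sym [set x : 'I_n | (x < m)%N]).

Lemma mem_SymS_mul_tperm m (lt_mn : (m < n)%N) (j : 'I_n) s :
  let last := Ordinal lt_mn in (j <= m)%N ->
  ((tperm j last * s)%g \in S_ m.+1) && ((tperm j last * s)^-1%g last == j)
    = (s \in S_ m).
Proof.
move=> last le_jm.
have -> : ((tperm j last * s)^-1%g last == j) = (s last == last).
  rewrite invMg tpermV permM -[in X in _ == X](tpermR j last) (inj_eq perm_inj).
  by apply/eqP/eqP => e; [rewrite -{1}e permKV | rewrite -{1}e permK].
have on_tperm : perm_on [set x : 'I_n | (x < m.+1)%N] (tperm j last).
  apply: subset_trans (tperm_on j last) _; apply/subsetP => z.
  by rewrite !inE => /orP[]/eqP->.
rewrite !inE; apply/andP/idP => [[on_js /eqP s_last]|on_s].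
- have on_s : perm_on [set x : 'I_n | (x < m.+1)%N] s.
    by rewrite -(tpermKg j last s); apply: perm_onM.
  apply/subsetP => z sz; have := subsetP on_s z sz; rewrite !inE ltnS leq_eqVlt.
  case/orP => [/eqP z_m|//].
  have z_last : z = last by apply: val_inj.
  by move: sz; rewrite inE z_last s_last eqxx.
- split; last by rewrite (out_perm on_s) // inE ltnn.
  apply: perm_onM => //; apply: subset_trans on_s _.
  by apply/subsetP => z; rewrite !inE => /ltnW.
Qed.

(* [s] in [S_ m.+1] is uniquely [(j m) * s'] with [s'] in [S_ m], namely
   [j = s^-1 m]. *)
Lemma sum_SymS (R : nmodType) m (lt_mn : (m < n)%N) (F : {perm 'I_n} -> R) :
  \sum_(s in S_ m.+1) F s =
  \sum_(s in S_ m) \sum_(j < m.+1)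
     F (tperm (widen_ord lt_mn j) (Ordinal lt_mn) * s)%g.
Proof.
set last := Ordinal lt_mn.
rewrite (partition_big (fun s : {perm 'I_n} => s^-1%g last)
                       (fun j : 'I_n => (j < m.+1)%N)) /=.
  rewrite (big_ord_narrow (F := fun j => \sum_(s in S_ m.+1 | s^-1%g last == j) F s)).
  rewrite [RHS]exchange_big /=; apply: eq_bigr => j _.
  rewrite (reindex_inj (mulgI (tperm (widen_ord lt_mn j) last))) /=.
  by apply: eq_bigl => s; apply: mem_SymS_mul_tperm; rewrite /= -ltnS.
move=> s; rewrite inE => /perm_onV on_sV.
by have := perm_closed last on_sV; rewrite !inE /= ltnSn.
Qed.

Lemma sum_SymS_tlen (R : pzSemiRingType) m (lt_mn : (m < n)%N) (f : nat -> R) :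
  (2 <= m)%N ->
  \sum_(s in S_ m.+1) f (len s) =
  \sum_(s in S_ m) f (len s) + m%:R * \sum_(s in S_ m) f (len s).+1.
Proof.
move=> ge2_m; rewrite sum_SymS mulr_sumr -big_split; apply: eq_bigr => s Ss.
rewrite big_ord_recr /= (_ : widen_ord _ _ = Ordinal lt_mn); last exact: val_inj.
rewrite tperm1 mul1g addrC mulr_natl -[m in _ *+ m]card_ord -sumr_const.
congr (_ + _); apply: eq_bigr => j _; rewrite tlen_mul_tperm_fix //.
- by rewrite inE in Ss; rewrite (out_perm Ss) // inE ltnn.
- by rewrite -val_eqE /= neq_ltn ltn_ord.
Qed.

Lemma Sym_lt1 : S_ 1 = [set 1%g].
Proof.
apply/setP => s; rewrite !inE; apply/idP/eqP => [on_s|->]; last exact: perm_on1.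
have sub1 : [set x : 'I_n | (x < 1)%N] \subset [set Ordinal (ltnW n_gt1)].
  by apply/subsetP => x; rewrite !inE ltnS leqn0 => /eqP x0; apply/eqP/val_inj.
by apply: perm_on_id on_s _; rewrite (leq_trans (subset_leq_card sub1)) ?cards1.
Qed.

Lemma sum_Sym2_tlen (R : nmodType) (f : nat -> R) :
  \sum_(s in S_ 2) f (len s) = f 0%N *+ 2.
Proof.
rewrite (sum_SymS n_gt1) Sym_lt1 big_set1 big_ord_recr big_ord1 /=.
rewrite (_ : widen_ord n_gt1 ord_max = Ordinal n_gt1); last exact: val_inj.
rewrite (_ : widen_ord n_gt1 (widen_ord _ ord0) = Ordinal (ltnW n_gt1)).
  by rewrite tperm1 mulg1 -[t0]mulg1 tlen_mul_t0 mul1g tlen1 mulr2n.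
exact: val_inj.
Qed.

Definition tlen_moment p m : rat := \sum_(s in S_ m) (len s)%:R ^+ p.

Lemma tlen_momentS p m : (2 <= m < n)%N ->
  tlen_moment p m.+1 =
  tlen_moment p m + m%:R * \sum_(i < p.+1) 'C(p, i)%:R * tlen_moment i m.
Proof.
case/andP=> ge2_m lt_mn.
rewrite /tlen_moment (sum_SymS_tlen lt_mn (fun k => k%:R ^+ p)) //.
congr (_ + _ * _); under [RHS]eq_bigr do rewrite mulr_sumr.
rewrite [RHS]exchange_big; apply: eq_bigr => s _ /=.
rewrite -natr1 addrC exprDn; apply: eq_bigr => i _.
by rewrite expr1n mul1r mulr_natl.
Qed.

Lemma tlen_moment0 m : (2 <= m <= n)%N -> tlen_moment 0 m = m`!%:R.
Proof.
move: m; apply: (@nat_ind_from _ 2 n) => [|m m_range IHm].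
  by rewrite /tlen_moment (sum_Sym2_tlen (fun k => k%:R ^+ 0)).
by rewrite tlen_momentS // big_ord_recr big_ord0 /= IHm bin0 factS natrM -natr1; ring.
Qed.

Lemma tlen_moment1 m :
  (2 <= m <= n)%N -> tlen_moment 1 m = m`!%:R * (m%:R - harm m - 1 / 2).
Proof.
move: m; apply: (@nat_ind_from _ 2 n) => [|m m_range IHm].
  rewrite /tlen_moment (sum_Sym2_tlen (fun k => k%:R ^+ 1)) (harmS 1) (harmS 0).
  by rewrite /harm big_geq.
have m_le : (2 <= m <= n)%N by case/andP: m_range => -> /ltnW.
rewrite tlen_momentS // !big_ord_recr big_ord0 /= IHm tlen_moment0 //.
rewrite harmS factS natrM -[m.+1%:R]natr1 bin0 binn.
by field; rewrite natr1 pnatr_eq0.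
Qed.

Lemma tlen_moment2 m : (2 <= m <= n)%N ->
  tlen_moment 2 m =
  m`!%:R * ((m%:R - harm m - 1 / 2) ^+ 2 + (harm m - harm2 m - 1 / 4)).
Proof.
move: m; apply: (@nat_ind_from _ 2 n) => [|m m_range IHm].
  rewrite /tlen_moment (sum_Sym2_tlen (fun k => k%:R ^+ 2)) (harmS 1) (harmS 0).
  by rewrite (harm2S 1) (harm2S 0) /harm /harm2 !big_geq.
have m_le : (2 <= m <= n)%N by case/andP: m_range => -> /ltnW.
rewrite tlen_momentS // !big_ord_recr big_ord0 /= IHm tlen_moment1 // tlen_moment0 //.
rewrite harmS harm2S factS natrM -[m.+1%:R]natr1 bin0 bin1 binn.
by field; rewrite natr1 pnatr_eq0.
Qed.

(* Multiplying by [t0] preserves [len] and swaps [Alt 'I_n] with its complement. *)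
Lemma sum_Alt_tlen (f : nat -> rat) :
  (\sum_(v in Alt 'I_n) f (len v)) *+ 2 = \sum_(s in S_ n) f (len s).
Proof.
have -> : \sum_(s in S_ n) f (len s) = \sum_s f (len s).
  by apply: eq_bigl => s; rewrite !inE; apply/subsetP => x _; rewrite inE ltn_ord.
rewrite [RHS](bigID (mem (Alt 'I_n))) /= mulr2n; congr (_ + _).
rewrite [RHS](reindex_inj (mulgI t0)) /=; apply: eq_big => v.
  by rewrite !Alt_even odd_mul_tperm /= negbK.
by rewrite tlen_mul_t0.
Qed.

Lemma EAlt_tlen (f : nat -> rat) :
  EAlt (fun v : {perm 'I_n} => f (ellT v)) =
  (n`!%:R)^-1 * \sum_(s in S_ n) f (len s).
Proof.
have card_AltE : (#|Alt 'I_n| * 2)%N = n`! by rewrite mulnC card_Alt ?card_ord.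
have Alt_neq0 : #|Alt 'I_n|%:R != 0 :> rat by rewrite pnatr_eq0 -lt0n cardG_gt0.
rewrite /EAlt; under eq_bigr => v Av do rewrite (ellT_tlen n_gt1 Av).
by rewrite -sum_Alt_tlen -card_AltE natrM; field.
Qed.

End Distribution.

Theorem theorem8p4 (n : nat) (hn : (2 <= n)%N) :
  EAlt (fun v : {perm 'I_n} => (ellT v)%:R) = n%:R - harm n - 1 / 2 /\
  VarAlt (fun v : {perm 'I_n} => (ellT v)%:R) = harm n - harm2 n - 1 / 4.
Proof.
have n_range : (2 <= n <= n)%N by rewrite hn leqnn.
have fact_neq0 : n`!%:R != 0 :> rat by rewrite pnatr_eq0 -lt0n fact_gt0.
have mean : EAlt (fun v : {perm 'I_n} => (ellT v)%:R) = n%:R - harm n - 1 / 2.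
  by rewrite (EAlt_tlen hn (fun k => k%:R)) -/(tlen_moment hn 1 n) tlen_moment1 ?mulKf.
split=> //; rewrite /VarAlt mean (EAlt_tlen hn (fun k => k%:R ^+ 2)).
by rewrite -/(tlen_moment hn 2 n) tlen_moment2 ?mulKf // addrC addKr.
Qed.
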